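(* In the typical setting below, with $\nu_{p-1}=\lfloor\frac{a+(p-1)\ell}{p}\rfloor$, one has $\nu_{p-1}\le e+\frac{(p-1)(r-1)c}{r}$, with equality if and only if $t\ge\frac{rpe}{p-1}-r$.
   Context: Typical setting: $p$ is an odd prime, $K$ a finite extension of $\mathbb{Q}_p$ with absolute ramification index $e$, and $L/K$ a degree $p$ extension whose normal closure $\widetilde L$ is totally ramified over $K$. Then $\mathrm{Gal}(\widetilde L/K)\cong C_p\rtimes C_r$ with $r=[\widetilde L:L]$ dividing $p-1$. The ramification jump $t$ is the integer with $G_t$ of order $p$ and $G_{t+1}=1$ (lower numbering ramification groups of $\widetilde L/K$); one has $1\le t\le rpe/(p-1)$. Assume $L/K$ is typical, i.e. $p\nmid t$ (equivalently $t<rpe/(p-1)$). Let $c$ be the remainder of $t$ mod $r$, $b=(t-pc)/r\in\mathbb{Z}$, $\ell=cp+b=\frac{pc(r-1)+t}{r}$, $a$ the remainder of $\ell$ mod $p$ (so $1\le a\le p-1$). *)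

From HB Require Import structures.
From mathcomp Require Import all_boot all_order all_algebra.
Set Implicit Arguments. Unset Strict Implicit. Unset Printing Implicit Defensive.
Import Order.TTheory GRing.Theory Num.Theory.
Local Open Scope ring_scope.

(* Numerical invariants attached to a typical degree-p extension, as functions
   of p, r, t (all natural numbers); integer-valued where they may be negative. *)

Definition cc (r t : nat) : nat := (t %% r)%N.
(* b = (t - p c) / r  (an integer; exact division since r | p-1) *)
Definition bb (p r t : nat) : int := ((Posz t - Posz (p * cc r t)%N) %/ Posz r)%Z.
Definition ll (p r t : nat) : int := Posz (cc r t * p)%N + bb p r t.
Definition aa (p r t : nat) : int := (ll p r t %% Posz p)%Z.
Definition nu (p r t : nat) : int :=
  ((aa p r t + Posz p.-1 * ll p r t) %/ Posz p)%Z.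

From HB Require Import structures.
From mathcomp Require Import all_boot all_order all_algebra.
From mathcomp Require Import zify ring.
Set Implicit Arguments. Unset Strict Implicit.
Import Order.TTheory GRing.Theory Num.Theory.
Local Open Scope ring_scope.

(* Write p - 1 = m r and t = k r + c.  Then b = k - m c, so l = p (k + c) - m t,
   and since a + (p - 1) l = p (l - floor(l / p)) one gets
   nu_{p-1} = l - floor(l / p) = m (r - 1) c + ceil(m t / p),
   while the right-hand side is e + m (r - 1) c.  The hypothesis t (p - 1) <= r p e
   says m t <= p e, so ceil(m t / p) <= e, with equality iff p (e - 1) < m t, which is
   exactly the threshold t >= r p e / (p - 1) - r. *)

Definition divz_ceil (x d : int) : int := - ((- x) %/ d)%Z.

Lemma divz_ceil_le (x d e : int) : 0 < d -> x <= e * d -> divz_ceil x d <= e.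
Proof. by move=> d_gt0 x_le; rewrite /divz_ceil lerNl lez_divRL // mulNr lerN2. Qed.

Lemma divz_ceil_eq (x d e : int) :
  0 < d -> divz_ceil x d = e <-> (e - 1) * d < x <= e * d.
Proof.
move=> d_gt0; split=> [<- | /andP[lt_x le_x]].
  have := lez_floor (- x) (lt0r_neq0 d_gt0); have := ltz_ceil (- x) d_gt0.
  by rewrite /divz_ceil => ? ?; apply/andP; split; nia.
apply/eqP; rewrite eq_le divz_ceil_le //= /divz_ceil lerNr -ltzD1 ltz_divLR //.
nia.
Qed.

Lemma divz_modDpredM (l : int) (p : nat) :
  (0 < p)%N -> (((l %% p)%Z + p.-1%:Z * l) %/ p)%Z = l - (l %/ p)%Z.
Proof.
move=> p_gt0; have p_neq0 : p%:Z != 0 by rewrite eqz_nat -lt0n.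
have mod_l : (l %% p)%Z = l - (l %/ p)%Z * p by rewrite {2}(divz_eq l p); ring.
by rewrite mod_l predn_int // (_ : _ + _ = (l - (l %/ p)%Z) * p) ?mulzK //; ring.
Qed.

Section TypicalInvariants.

Variables (p m r t : nat).
Hypotheses (pE : p = (m * r).+1) (r_gt0 : (0 < r)%N).

Lemma bbE : bb p r t = (t %/ r)%N%:Z - (m * cc r t)%N%:Z.
Proof.
rewrite /bb; have t_eq : t = (t %/ r * r + cc r t)%N by rewrite /cc -divn_eq.
rewrite (_ : _ - _ = ((t %/ r)%N%:Z - (m * cc r t)%N%:Z) * r) ?mulzK //.
  by rewrite eqz_nat -lt0n.
by rewrite pE; nia.
Qed.

Lemma llE : ll p r t = p%:Z * (t %/ r + cc r t)%N%:Z - (m * t)%N%:Z.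
Proof.
rewrite /ll bbE; have t_eq : t = (t %/ r * r + cc r t)%N by rewrite /cc -divn_eq.
by rewrite pE; nia.
Qed.

Lemma nuE : nu p r t = (m * r.-1 * cc r t)%N%:Z + divz_ceil (m * t)%N p.
Proof.
have p_gt0 : (0 < p)%N by rewrite pE.
rewrite /nu /aa divz_modDpredM // llE /divz_ceil.
rewrite [p%:Z * _]mulrC divzMDl; last by rewrite eqz_nat -lt0n.
have t_eq : t = (t %/ r * r + cc r t)%N by rewrite /cc -divn_eq.
rewrite pE /=; nia.
Qed.

Hypothesis m_gt0 : (0 < m)%N.

Lemma typical_thresholdE (e : nat) :
  (r * p * e)%N%:R / p.-1%:R - r%:R <= (t%:R : rat) <-> (e%:Z - 1) * p < (m * t)%N%:Z.
Proof.
have pm1E : p.-1 = (m * r)%N by rewrite pE.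
rewrite lerBlDr ler_pdivrMr ?ltr0n ?pm1E ?muln_gt0 ?m_gt0 // -natrD -natrM ler_nat.
rewrite (_ : ((t + r) * (m * r) = r * (m * t + p.-1))%N); last by rewrite pm1E; nia.
by rewrite -mulnA leq_pmul2l //; split; lia.
Qed.

End TypicalInvariants.

Theorem corollary6p6 (p e r t : nat) :
  prime p -> odd p -> (0 < e)%N ->
  (0 < r)%N -> (r %| p.-1)%N ->
  (1 <= t)%N -> (t * p.-1 <= r * p * e)%N ->
  ~~ (p %| t)%N ->
  let rhs : rat := e%:R + ((p.-1 * r.-1 * cc r t)%N)%:R / r%:R in
  ((nu p r t)%:~R <= rhs) /\
  ((nu p r t)%:~R = rhs <->
     (r * p * e)%N%:R / (p.-1)%:R - r%:R <= (t%:R : rat)).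
Proof.
move=> p_prime _ _ r_gt0 /dvdnP[m pm1E] _ t_bound _ rhs.
have pE : p = (m * r).+1 by rewrite -pm1E prednK ?prime_gt0.
have m_gt0 : (0 < m)%N.
  by move: (prime_gt1 p_prime); rewrite pE ltnS muln_gt0 => /andP[].
have rhsE : rhs = ((m * r.-1 * cc r t)%N%:Z + e%:Z)%:~R.
  rewrite /rhs pm1E (mulnC m) -!mulnA natrM mulrC mulKf ?pnatr_eq0 -?lt0n //.
  by rewrite rmorphD addrC !mulnA.
have mt_le : (m * t)%N%:Z <= e%:Z * p.
  have : (r * (m * t) <= r * (p * e))%N by move: t_bound; rewrite pm1E; nia.
  by rewrite leq_pmul2l //; lia.
have p_gt0 : 0 < p%:Z by rewrite pE.
rewrite rhsE (typical_thresholdE t pE) // (nuE t pE) // ler_int lerD2l divz_ceil_le //.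
split=> //.
by rewrite (rwP eqP) eqr_int (inj_eq (addrI _)) -(rwP eqP) divz_ceil_eq // mt_le andbT.
Qed.
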